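(* Let $\mathcal{S}$ be an instance space, $\mathcal{W}$ a hypothesis space, and $\ell:\mathcal{S}\times\mathcal{W}\to\mathbb{R}^+$ a nonnegative loss function. Let $\mathbf{S}=(S_1,\ldots,S_n)$ have law $\pi^{\otimes n}$ for an (unknown) distribution $\pi$ on $\mathcal{S}$, and let $W\in\mathcal{W}$ be produced by a learning algorithm $\mathcal{A}$ given by a conditional distribution $P_{W|\mathbf{S}}$; let $P_W$ denote the marginal law of $W$. Let $(\bar S,\bar W)\sim \pi\otimes P_W$ (independent) and let $\Lambda(\lambda)=\log\mathbb{E}\big[e^{\lambda(\ell(\bar S,\bar W)-\mathbb{E}[\ell(\bar S,\bar W)])}\big]$ be the cumulant generating function of $\ell(\bar S,\bar W)$. Suppose that for some $b_+\in(0,\infty]$ there is a convex $\psi_+:[0,b_+)\to\mathbb{R}$ with $\psi_+(0)=\psi_+'(0)=0$ and $\Lambda(\lambda)\le\psi_+(\lambda)$ for all $\lambda\in[0,b_+)$, and that for some $b_-\in(0,\infty]$ there is a convex $\psi_-:[0,b_-)\to\mathbb{R}$ with $\psi_-(0)=\psi_-'(0)=0$ and $\Lambda(\lambda)\le\psi_-(-\lambda)$ for all $\lambda\in(-b_-,0]$. Then \[ -\frac{1}{n}\sum_{i=1}^n \psi_+^{\ast-1}\big(I(S_i;W)\big)\;\le\;{\rm gen}(\pi,\mathcal{A})\;\le\;\frac{1}{n}\sum_{i=1}^n \psi_-^{\ast-1}\big(I(S_i;W)\big). \]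
   Context: For a hypothesis $w$, the true risk is $L_\pi(w)=\mathbb{E}_{S\sim\pi}[\ell(S,w)]$ and the empirical risk is $L_{\mathbf{S}}(w)=\frac1n\sum_{i=1}^n\ell(S_i,w)$. The expected generalization error is ${\rm gen}(\pi,\mathcal{A})=\mathbb{E}[L_\pi(W)-L_{\mathbf{S}}(W)]$, with the expectation over $(\mathbf{S},W)\sim\pi^{\otimes n}P_{W|\mathbf{S}}$. $I(\cdot;\cdot)$ denotes mutual information. For a convex $\psi:[0,b)\to\mathbb{R}$, $\psi^\ast(x)=\sup_{\lambda\in[0,b)}(\lambda x-\psi(\lambda))$ is its Legendre dual and $\psi^{\ast-1}$ denotes the inverse of $\psi^\ast$ (on $[0,\infty)$). *)

From HB Require Import structures.
From mathcomp Require Import all_boot all_order all_algebra.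
From mathcomp Require Import all_classical all_reals all_analysis.

Set Implicit Arguments.
Unset Strict Implicit.
Unset Printing Implicit Defensive.

Import Order.TTheory GRing.Theory Num.Theory.
Import numFieldNormedType.Exports.

Local Open Scope classical_set_scope.
Local Open Scope ring_scope.

Section pairRV.
Context d dS dW (Omega : measurableType d) (S : measurableType dS)
  (W : measurableType dW).
Variables (X : {mfun Omega >-> S}) (Y : {mfun Omega >-> W}).

Definition pairRV : Omega -> S * W := fun w => (X w, Y w).

Let mpairRV : measurable_fun [set: Omega] pairRV.
Proof. by apply: measurable_fun_pair. Qed.

HB.instance Definition _ := isMeasurableFun.Build _ _ _ _ pairRV mpairRV.
End pairRV.

Section defs.
Local Open Scope ereal_scope.
Context (R : realType).

Definition KL d (T : measurableType d) (p q : probability T R) : \bar R :=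
  if pselect (p `<< q) then
    \int[p]_x (ln (fine (Radon_Nikodym (charge_of_finite_measure p) q x)))%:E
  else +oo.

Definition mutual_info d dS dW (Omega : measurableType d)
  (S : measurableType dS) (W : measurableType dW) (P : probability Omega R)
  (X : {mfun Omega >-> S}) (Y : {mfun Omega >-> W}) : \bar R :=
  KL (distribution P (pairRV X Y)) (distribution P X \x distribution P Y).

Definition iid_law d dS (Omega : measurableType d) (S : measurableType dS)
  (P : probability Omega R) (n : nat) (Ss : 'I_n -> Omega -> S)
  (pi : probability S R) : Prop :=
  forall A : 'I_n -> set S, (forall i, measurable (A i)) ->
    P (\bigcap_(i in [set: 'I_n]) (Ss i @^-1` A i)) = \prod_(i < n) pi (A i).

Definition dom0b (b : \bar R) : set R := [set x | (0 <= x)%R /\ x%:E < b].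

Definition legendre_dual (b : \bar R) (psi : R -> R) (x : R) : \bar R :=
  ereal_sup [set ((l * x - psi l)%R)%:E | l in dom0b b].

(* (Generalized) inverse of psi^* on [0, +oo):
   psi^{*-1}(y) = inf { x >= 0 | psi^*(x) > y }  (= +oo when y = +oo). *)
Definition legendre_dual_inv (b : \bar R) (psi : R -> R) (y : \bar R) : \bar R :=
  ereal_inf [set x%:E | x in [set x : R | (0 <= x)%R /\ y < legendre_dual b psi x]].

Definition cgf d (T : measurableType d) (mu : probability T R) (f : T -> R)
  (l : R) : \bar R :=
  let m := fine (\int[mu]_x (f x)%:E) in
  match \int[mu]_x (expR (l * (f x - m)))%:E with
  | r%:E => (ln r)%:E
  | _ => +oo
  end.

Definition pop_risk dS (S : measurableType dS) (W : Type)
  (pi : probability S R) (loss : S -> W -> R) (w : W) : \bar R :=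
  \int[pi]_s (loss s w)%:E.

Definition emp_risk (S : Type) (W : Type) (n : nat) (s : 'I_n -> S)
  (loss : S -> W -> R) (w : W) : \bar R :=
  (n%:R^-1)%:E * \sum_(i < n) (loss (s i) w)%:E.

Definition gen_error d dS dW (Omega : measurableType d) (S : measurableType dS)
  (W : measurableType dW) (P : probability Omega R) (pi : probability S R)
  (loss : S -> W -> R) (n : nat) (Ss : 'I_n -> Omega -> S) (Wr : Omega -> W)
  : \bar R :=
  \int[P]_o (pop_risk pi loss (Wr o) - emp_risk (fun i => Ss i o) loss (Wr o)).

End defs.

From HB Require Import structures.
From mathcomp Require Import all_boot all_order all_algebra.
From mathcomp Require Import all_classical all_reals all_analysis.
From mathcomp Require Import measurable_realfun lra.
Import Order.TTheory GRing.Theory Num.Theory.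
Import numFieldNormedType.Exports.
Local Open Scope classical_set_scope.
Local Open Scope ring_scope.

(* Fix i, let p be the law of (S_i, W) and q = P_{S_i} (x) P_W, so that
   I(S_i; W) = KL(p || q); by the i.i.d. assumption q agrees with pi (x) P_W,
   the law of (Sbar, Wbar).  Integrating 1 + t <= e^t against p at
   t = lambda (l - E_q l) - Lambda(lambda) - log (dp/dq) gives the
   Donsker-Varadhan inequality
     lambda (E_p l - E_q l) <= KL(p || q) + Lambda(lambda),
   and for lambda > 0 the same pointwise bound shows that l is p-integrable.
   With Lambda(lambda) <= psi_+(lambda), resp. Lambda(-lambda) <= psi_-(lambda),
   a gap D (= E_p l - E_q l, resp. its opposite) satisfies
   lambda D <= I + psi(lambda) for every admissible lambda > 0, which forces
   D <= psi^{*-1}(I); only psi(0) = 0 is needed for this, not convexity.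
   Averaging over i, since gen = (1/n) sum_i (E_q l - E_p l), proves the
   theorem.  The degenerate case I(S_i; W) = +oo is trivial, and
   I(S_i; W) = -oo is excluded because the negative part of log (dp/dq) has
   p-integral at most 1. *)

Lemma mul_expRNln_le1 (R : realType) (x : R) : 0 <= x -> x * expR (- ln x) <= 1.
Proof.
rewrite le_eqVlt => /predU1P[<-|x0]; first by rewrite mul0r.
by rewrite expRN lnK ?posrE// mulfV ?lt0r_neq0.
Qed.

Lemma mul_maxNln_le1 (R : realType) (x : R) : 0 <= x -> x * Num.max (- ln x) 0 <= 1.
Proof.
rewrite le_eqVlt => /predU1P[<-|x0]; first by rewrite mul0r.
have Nln_le : - ln x <= x^-1.
  have := @le_ln1Dx R (x^-1 - 1); rewrite addrCA subrr addr0 lnV ?posrE//.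
  have x1 : -1 < x^-1 - 1 by rewrite ltrBrDl subrr invr_gt0.
  by move=> /(_ x1); lra.
rewrite -(mulfV (lt0r_neq0 x0)) ler_pM2l// ge_max Nln_le invr_ge0 ltW//.
Qed.

Lemma fin_num_integrable (R : realType) d (T : measurableType d)
    (mu : {measure set T -> \bar R}) (f : T -> R) :
  measurable_fun setT f -> (\int[mu]_x (f x)%:E)%E \is a fin_num ->
  mu.-integrable setT (EFin \o f).
Proof.
move=> mf fin; apply/integrableP; split; first exact/measurable_EFinP.
by rewrite integral_fin_num_abs.
Qed.

Lemma ge0_lty_integrable (R : realType) d (T : measurableType d)
    (mu : {measure set T -> \bar R}) (h : T -> \bar R) :
  (forall x, 0 <= h x)%E -> measurable_fun setT h -> (\int[mu]_x h x < +oo)%E ->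
  mu.-integrable setT h.
Proof.
move=> h0 mh hfin; apply/integrableP; split => //.
by under eq_integral do rewrite gee0_abs//.
Qed.

Lemma integrable_EFinD {R : realType} {d} {T : measurableType d}
    {mu : {measure set T -> \bar R}} {D : set T} {f g : T -> R} : measurable D ->
  mu.-integrable D (EFin \o f) -> mu.-integrable D (EFin \o g) ->
  mu.-integrable D (EFin \o (f \+ g)).
Proof. by move=> mD; exact: integrableD. Qed.

Section kullback_leibler.
Local Open Scope ereal_scope.
Context {R : realType} {d} {T : measurableType d} {p q : probability T R}.
Hypothesis pq : p `<< q.

(* The nonnegative density of the sigma-finite construction; it agrees q-a.e.,
   hence p-a.e., with the derivative used in the definition of [KL]. *)
Let dens x : R := fine (Radon_Nikodym_SigmaFinite.f p q x).

Let densE x : Radon_Nikodym_SigmaFinite.f p q x = (dens x)%:E.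
Proof. by rewrite fineK// Radon_Nikodym_SigmaFinite.f_fin_num. Qed.

Let dens_ge0 x : (0 <= dens x)%R.
Proof. by rewrite -lee_fin -densE Radon_Nikodym_SigmaFinite.f_ge0. Qed.

Let mdens : measurable_fun setT dens.
Proof.
apply/measurable_EFinP; rewrite (_ : _ \o _ = Radon_Nikodym_SigmaFinite.f p q).
  exact/measurable_int/Radon_Nikodym_SigmaFinite.f_integrable.
by apply/funext => x /=; rewrite densE.
Qed.

Let mln_dens : measurable_fun setT (fun x => ln (dens x)).
Proof. exact: measurableT_comp (@measurable_ln R) mdens. Qed.

Let integral_dens (h : T -> R) : (forall x, 0 <= h x)%R -> measurable_fun setT h ->
  \int[p]_x (h x)%:E = \int[q]_x (h x * dens x)%:E.
Proof.
move=> h0 mh.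
have h0' x : 0 <= (h x)%:E by rewrite lee_fin.
rewrite -(Radon_Nikodym_SigmaFinite.change_of_variables pq h0' measurableT)//.
- by apply: eq_integral => x _; rewrite densE.
- exact/measurable_EFinP.
Qed.

Let KL_dens : KL p q = \int[p]_x (ln (dens x))%:E.
Proof.
rewrite /KL; case: pselect => // pq'; apply: ae_eq_integral => //.
- apply/measurable_EFinP/(measurableT_comp (@measurable_ln R)).
  exact: (measurableT_comp (f := fine)).
- exact/measurable_EFinP.
apply: (null_dominates_ae_eq measurableT pq).
apply: filterS (ae_eq_Radon_Nikodym_SigmaFinite pq measurableT) => x + _.
by rewrite /dens => ->.
Qed.

Lemma KL_gtNy : -oo < KL p q.
Proof.
have neg_le1 : \int[p]_x (fun x => (ln (dens x))%:E)^\- x <= 1.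
  under eq_integral do rewrite funenegE -EFinN -EFin_max.
  rewrite integral_dens; last 2 first.
  - by move=> x; rewrite le_max lexx orbT.
  - by apply: measurable_maxr => //; exact: measurable_funN.
  apply: (@le_trans _ _ (\int[q]_x cst 1 x)).
    apply: ge0_le_integral => //.
    - by move=> x _; rewrite lee_fin mulr_ge0// le_max lexx orbT.
    - apply/measurable_EFinP/measurable_funM => //.
      by apply: measurable_maxr => //; exact: measurable_funN.
    - by move=> x _; rewrite /= lee_fin mulrC mul_maxNln_le1.
  by rewrite integral_cst// mul1e probability_le1.
rewrite KL_dens integralE; apply: (@lt_le_trans _ _ (0 - 1)).
  by rewrite ltNye.
by apply: leeB => //; apply: integral_ge0 => x _; exact: funepos_ge0.
Qed.

Section donsker_varadhan.
Context {f : T -> R} {c m z k : R}.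
Hypothesis mf : measurable_fun setT f.
Hypothesis mgf : \int[q]_x (expR (c * (f x - m)))%:E = z%:E.
Hypothesis KLk : KL p q = k%:E.

Let g x := (c * (f x - m))%R.
(* [y = e^g / (z dp/dq)]; the junk value [ln 0 = 0] keeps [dens * y <= e^g / z]
   true where [dens] vanishes. *)
Let y x := (expR (- ln z) * expR (g x) * expR (- ln (dens x)))%R.

Let mg : measurable_fun setT g.
Proof. by apply: measurable_funM => //; exact: measurable_funB. Qed.

Let mexpg : measurable_fun setT (fun x => expR (g x)).
Proof. exact: measurableT_comp (@measurable_expR R) mg. Qed.

Let my : measurable_fun setT y.
Proof.
apply: measurable_funM; first exact: measurable_funM.
exact/(measurableT_comp (@measurable_expR R))/measurable_funN.
Qed.

Let y_ge0 x : (0 <= y x)%R.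
Proof. by rewrite !mulr_ge0 ?expR_ge0. Qed.

Let g_le x : (g x <= ln z - 1 + ln (dens x) + y x)%R.
Proof.
have := expR_ge1Dx (- ln z + g x - ln (dens x)).
by rewrite /y -!expRD; lra.
Qed.

Let integral_y_le1 : \int[p]_x (y x)%:E <= 1.
Proof.
rewrite integral_dens//.
apply: (@le_trans _ _ (\int[q]_x (expR (- ln z) * expR (g x))%:E)).
  apply: ge0_le_integral => //.
  - by move=> x _; rewrite lee_fin mulr_ge0.
  - by apply/measurable_EFinP; exact: measurable_funM.
  - by apply/measurable_EFinP; exact: measurable_funM.
  move=> x _; rewrite lee_fin /y -mulrA ler_piMr ?mulr_ge0 ?expR_ge0//.
  by rewrite mulrC mul_expRNln_le1.
under eq_integral do rewrite EFinM.
rewrite ge0_integralZl_EFin//; last exact/measurable_EFinP.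
have z_ge0 : (0 <= z)%R.
  by rewrite -lee_fin -mgf; apply: integral_ge0 => x _; rewrite lee_fin expR_ge0.
by rewrite mgf -EFinM lee_fin mulrC mul_expRNln_le1.
Qed.

Let integrable_y : p.-integrable setT (EFin \o y).
Proof.
apply: fin_num_integrable => //.
rewrite ge0_fin_numE ?(le_lt_trans integral_y_le1) ?ltry//.
by apply: integral_ge0 => x _; rewrite lee_fin.
Qed.

Let integrable_ln_dens : p.-integrable setT (EFin \o (fun x => ln (dens x))).
Proof. by apply: fin_num_integrable => //; rewrite -KL_dens KLk. Qed.

Let integrable_cst (r : R) : p.-integrable setT (EFin \o (fun=> r)).
Proof. exact: finite_measure_integrable_cst. Qed.

Let integrable_bound :
  p.-integrable setT (EFin \o (fun x => ln z - 1 + ln (dens x) + y x)%R).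
Proof.
apply: integrable_EFinD measurableT _ integrable_y.
exact: integrable_EFinD measurableT (integrable_cst _) integrable_ln_dens.
Qed.

Lemma donsker_varadhan : p.-integrable setT (EFin \o f) ->
  (c * (\int[p]_x f x - m) <= k + ln z)%R.
Proof.
move=> intf.
have intfm : p.-integrable setT (EFin \o (fun x => f x - m)%R).
  by apply: eq_integrable (integrableB measurableT intf (integrable_cst m)).
have intg : p.-integrable setT (EFin \o g).
  by apply: eq_integrable (integrableZl measurableT c intfm).
have := le_Rintegral measurableT intg integrable_bound (fun x _ => g_le x).
rewrite /g RintegralZl// RintegralB// !RintegralD//; last first.
  exact: integrable_EFinD measurableT (integrable_cst _) integrable_ln_dens.
have p1 : fine (p setT) = 1%R by rewrite probability_setT.
rewrite !Rintegral_cst// p1.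
have -> : (\int[p]_x ln (dens x))%R = k by rewrite /Rintegral -KL_dens KLk.
have : (\int[p]_x y x <= 1)%R.
  by rewrite /Rintegral -lee_fin fineK// integrable_fin_num.
lra.
Qed.

Lemma integrable_of_exp_moment : (forall x, 0 <= f x)%R -> (0 < c)%R ->
  p.-integrable setT (EFin \o f).
Proof.
move=> f_ge0 c0; pose h x := (m + c^-1 * (ln z - 1 + ln (dens x) + y x))%R.
have inth : p.-integrable setT (EFin \o h).
  apply: integrable_EFinD measurableT (integrable_cst m) _.
  by apply: eq_integrable (integrableZl measurableT c^-1 integrable_bound).
apply: (le_integrable measurableT _ _ inth); first exact/measurable_EFinP.
move=> x _; rewrite /= lee_fin ger0_norm// (le_trans _ (ler_norm _))// /h.
by rewrite -lerBlDl mulrC ler_pdivlMr// mulrC g_le.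
Qed.
End donsker_varadhan.

Lemma KL_ge0 : 0 <= KL p q.
Proof.
have := KL_gtNy; case KLk: (KL p q) => [k| |//] _; last exact: leey.
rewrite lee_fin.
have mgf : \int[q]_x (expR (1 * ((fun=> 0%R) x - 0)))%:E = 1%:E.
  under eq_integral do rewrite subrr mulr0 expR0.
  by rewrite integral_cst// mul1e; exact: probability_setT.
have := donsker_varadhan (measurable_cst _) mgf KLk.
rewrite Rintegral_cst// mul0r subrr mulr0 ln1 addr0; apply.
exact: finite_measure_integrable_cst.
Qed.

Section cgf_bounds.
Context {f : T -> R} {c b k : R}.
Hypothesis mf : measurable_fun setT f.
Hypotheses (KLk : KL p q = k%:E) (cgf_le : cgf q f c <= b%:E).

Let mgf_fin : exists2 z, \int[q]_x (expR (c * (f x - \int[q]_x f x)))%:E = z%:E &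
  (ln z <= b)%R.
Proof.
by move: cgf_le; rewrite /cgf; case: (\int[q]_x _) => // z; rewrite lee_fin; exists z.
Qed.

Lemma cgf_integrable : (forall x, 0 <= f x)%R -> (0 < c)%R ->
  p.-integrable setT (EFin \o f).
Proof. by have [z mgf _] := mgf_fin; exact: integrable_of_exp_moment mgf KLk. Qed.

Lemma cgf_donsker_varadhan : p.-integrable setT (EFin \o f) ->
  (c * (\int[p]_x f x - \int[q]_x f x) <= k + b)%R.
Proof.
move=> intf; have [z mgf lnz] := mgf_fin.
by have := donsker_varadhan mf mgf KLk intf; lra.
Qed.
End cgf_bounds.

End kullback_leibler.

Lemma eq_cgf {R : realType} {d} {T : measurableType d} {mu nu : probability T R}
    (f : T -> R) :
  (forall A, measurable A -> mu A = nu A) -> cgf mu f = cgf nu f.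
Proof.
move=> munu; have E h : (\int[mu]_x h x = \int[nu]_x h x)%E.
  by apply: eq_measure_integral => A mA _; exact: munu.
by apply/funext => l; rewrite /cgf !E.
Qed.

Section legendre_dual_inv.
Local Open Scope ereal_scope.
Context {R : realType} (b : \bar R) (psi : R -> R).

Lemma legendre_dual_inv_ge0 y : 0 <= legendre_dual_inv b psi y.
Proof. by apply: le_ereal_inf_tmp => _ [x [x0 _] <-]; rewrite lee_fin. Qed.

Lemma legendre_dual_inv_pinfty : legendre_dual_inv b psi +oo = +oo.
Proof. by apply/ereal_inf_pinfty => _ /= [x [_ +] <-]; rewrite ltNge leey. Qed.

Lemma le_legendre_dual_inv (k D : R) : (0 <= k)%R -> (psi 0 = 0)%R ->
    (forall l, dom0b b l -> (0 < l)%R -> (l * D <= k + psi l)%R) ->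
  D%:E <= legendre_dual_inv b psi k%:E.
Proof.
move=> k0 psi0 le_kpsi; apply: le_ereal_inf_tmp => _ [x [x0 ltk] <-].
have [_ [l bl <-]] := ereal_sup_gt ltk; rewrite lte_fin => ltklx.
have l0 : (0 < l)%R.
  rewrite lt_neqAle (proj1 bl) andbT; apply/negP => /eqP l0.
  by move: ltklx; rewrite -l0 psi0 mul0r subr0; lra.
by rewrite lee_fin -(ler_pM2l l0); have := le_kpsi l bl l0; lra.
Qed.

End legendre_dual_inv.

Lemma iid_law_marginal (R : realType) (d dS : measure_display)
    (Omega : measurableType d) (S : measurableType dS)
    (P : probability Omega R) (pi : probability S R) (n : nat)
    (Ss : 'I_n -> {mfun Omega >-> S}) :
  iid_law P (fun i => Ss i : Omega -> S) pi ->
  forall i A, measurable A -> distribution P (Ss i) A = pi A.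
Proof.
move=> iid i A mA.
have := iid (fun j => if j == i then A else setT).
rewrite (bigD1 i)//= eqxx big1 ?mule1; last first.
  by move=> j /negbTE ->; exact: probability_setT.
move=> <-; last by move=> j; case: (j == i).
congr (P _); apply/seteqP; split => x /=.
  by move=> Ax j _; case: ifP => [/eqP -> //|].
by move=> /(_ i I); rewrite eqxx.
Qed.

Section generalization_error.
Local Open Scope ereal_scope.
Context {R : realType} {d dS dW : measure_display} {Omega : measurableType d}
  {S : measurableType dS} {W : measurableType dW}
  {P : probability Omega R} { pi : probability S R } {loss : S -> W -> R}
  {n : nat} {Ss : 'I_n -> {mfun Omega >-> S} } {Wr : {mfun Omega >-> W} }.
Hypotheses (n_gt0 : (0 < n)%N) (loss_ge0 : forall s w, (0 <= loss s w)%R)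
  (mloss : measurable_fun [set: S * W] (fun z => loss z.1 z.2)).
Hypothesis iid : iid_law P (fun i => Ss i : Omega -> S) pi.

Let Q := pi \x distribution P Wr.
Let m := (\int[Q]_z loss z.1 z.2)%R.
Let F i := (\int[P]_o loss (Ss i o) (Wr o))%R.

Let mlossE : measurable_fun [set: S * W] (fun z => (loss z.1 z.2)%:E).
Proof. exact/measurable_EFinP. Qed.

Let lossE_ge0 (z : S * W) : 0 <= (loss z.1 z.2)%:E.
Proof. by rewrite lee_fin. Qed.

Let mloss_pair i : measurable_fun setT (fun o => loss (Ss i o) (Wr o)).
Proof. exact: measurableT_comp mloss (measurable_funP (pairRV (Ss i) Wr)). Qed.

Let product_marginal i A :
  (distribution P (Ss i) \x distribution P Wr) A = Q A.
Proof. by apply: eq_measure_integral => B mB _; exact: iid_law_marginal. Qed.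

Let integral_loss_pair i :
  \int[distribution P (pairRV (Ss i) Wr)]_z (loss z.1 z.2)%:E =
  \int[P]_o (loss (Ss i o) (Wr o))%:E.
Proof. exact: ge0_integral_distribution. Qed.

Lemma mutual_info_gtNy i : -oo < mutual_info P (Ss i) Wr.
Proof.
rewrite /mutual_info.
have [pq|npq] := pselect (distribution P (pairRV (Ss i) Wr) `<<
  (distribution P (Ss i) \x distribution P Wr)); first exact: KL_gtNy.
by rewrite /KL; case: pselect.
Qed.

Let integral_pop_risk : Q.-integrable setT (fun z => (loss z.1 z.2)%:E) ->
  \int[P]_o pop_risk pi loss (Wr o) = m%:E.
Proof.
move=> intQ; rewrite /m /Rintegral fineK ?integrable_fin_num//.
rewrite (fubini_tonelli2 _ mlossE lossE_ge0) ge0_integral_distribution//.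
- exact: measurable_fun_fubini_tonelli_G.
- by move=> w; apply: integral_ge0.
Qed.

Let integral_emp_risk :
    (forall i, P.-integrable setT (EFin \o (fun o => loss (Ss i o) (Wr o)))) ->
  \int[P]_o emp_risk (fun i => Ss i o) loss (Wr o) = (n%:R^-1 * \sum_(i < n) F i)%:E.
Proof.
move=> intP; rewrite /emp_risk ge0_integralZl_EFin ?invr_ge0//; last 2 first.
- by move=> o _; apply: sume_ge0 => i _; rewrite lee_fin.
- by apply: emeasurable_sum => i; exact/measurable_EFinP.
rewrite ge0_integral_sum//; last 2 first.
- by move=> i; exact/measurable_EFinP.
- by move=> i o _; rewrite lee_fin.
rewrite EFinM -sumEFin; congr (_ * _); apply: eq_bigr => i _.
by rewrite /F /Rintegral fineK// (integrable_fin_num measurableT (intP i)).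
Qed.

Lemma gen_error_decomp : Q.-integrable setT (fun z => (loss z.1 z.2)%:E) ->
    (forall i, P.-integrable setT (EFin \o (fun o => loss (Ss i o) (Wr o)))) ->
  gen_error P pi loss (fun i => Ss i : Omega -> S) Wr =
    (n%:R^-1 * \sum_(i < n) (m - F i))%:E.
Proof.
move=> /integral_pop_risk int_pop /integral_emp_risk int_emp.
have int_pop_fin : P.-integrable setT (fun o => pop_risk pi loss (Wr o)).
  apply: ge0_lty_integrable; last by rewrite int_pop ltry.
    by move=> o; apply: integral_ge0 => s _; rewrite lee_fin.
  apply: measurableT_comp => //.
  exact: (measurable_fun_fubini_tonelli_G (m1 := pi) _ mlossE lossE_ge0).
have int_emp_fin : P.-integrable setT (fun o => emp_risk (fun i => Ss i o) loss (Wr o)).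
  apply: ge0_lty_integrable; last by rewrite int_emp ltry.
    move=> o; rewrite mule_ge0 ?lee_fin ?invr_ge0//.
    by apply: sume_ge0 => i _; rewrite lee_fin.
  by apply: measurable_funeM; apply: emeasurable_sum => i; exact/measurable_EFinP.
rewrite /gen_error integralB// int_pop int_emp -EFinB; congr EFin.
rewrite sumrB sumr_const card_ord mulrBr -[(m *+ n)%R]mulr_natr mulrCA.
by rewrite mulVf ?mulr1// pnatr_eq0 -lt0n.
Qed.

Lemma mean_legendre_dual_inv_pinfty (b : \bar R) (psi : R -> R) :
    (exists i, mutual_info P (Ss i) Wr = +oo) ->
  (n%:R^-1)%:E * \sum_(i < n) legendre_dual_inv b psi (mutual_info P (Ss i) Wr) = +oo.
Proof.
move=> [i MIi].
suff -> : \sum_(i < n) legendre_dual_inv b psi (mutual_info P (Ss i) Wr) = +oo.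
  by rewrite gt0_muley// lte_fin invr_gt0 ltr0n.
apply/esum_eqyP; last by exists i; rewrite mem_index_enum MIi legendre_dual_inv_pinfty.
by move=> j _; rewrite gt_eqF// (lt_le_trans _ (legendre_dual_inv_ge0 _ _ _)) ?ltNy0.
Qed.

Section risk_gap.
Context {bp bm : \bar R} {psip psim : R -> R}.
Hypotheses (bp_gt0 : 0 < bp) (psip0 : (psip 0 = 0)%R) (psim0 : (psim 0 = 0)%R).
Hypothesis cgf_psip : forall l, dom0b bp l ->
  cgf Q (fun z => loss z.1 z.2) l <= (psip l)%:E.
Hypothesis cgf_psim : forall l, (l <= 0)%R -> - bm < l%:E ->
  cgf Q (fun z => loss z.1 z.2) l <= (psim (- l))%:E.

Lemma risk_gap_bounds i k : mutual_info P (Ss i) Wr = k%:E ->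
  [/\ P.-integrable setT (EFin \o (fun o => loss (Ss i o) (Wr o))),
      (m - F i)%:E <= legendre_dual_inv bm psim k%:E &
      (F i - m)%:E <= legendre_dual_inv bp psip k%:E].
Proof.
rewrite /mutual_info; set p := distribution _ _; set q := _ \x _ => KLk.
have pq : p `<< q by move: KLk; rewrite /KL; case: pselect.
have := KL_ge0 pq; rewrite KLk lee_fin => k_ge0.
have cgfE := eq_cgf (fun z => loss z.1 z.2) (fun A _ => product_marginal i A).
have mE : (\int[q]_z loss z.1 z.2)%R = m.
  by rewrite /Rintegral (eq_measure_integral Q)// => A _ _; exact: product_marginal.
have FE : (\int[p]_z loss z.1 z.2)%R = F i.
  by rewrite /Rintegral integral_loss_pair.
have DV l b : cgf Q (fun z => loss z.1 z.2) l <= b%:E ->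
    p.-integrable setT (EFin \o (fun z => loss z.1 z.2)) ->
    (l * (F i - m) <= k + b)%R.
  by rewrite -cgfE -FE -mE; exact: cgf_donsker_varadhan.
have [l0 l0_gt0 l0_dom] : exists2 l, (0 < l)%R & dom0b bp l.
  move: bp_gt0; case: bp => [r r0| _|//].
    by exists (r / 2)%R; [|split; rewrite ?lte_fin]; rewrite lte_fin in r0; lra.
  by exists 1%R; [|split; rewrite ?ltry].
have cgf_l0 : cgf q (fun z => loss z.1 z.2) l0 <= (psip l0)%:E.
  by rewrite cgfE; exact: cgf_psip.
have intp := cgf_integrable pq mloss KLk cgf_l0 (fun z => loss_ge0 _ _) l0_gt0.
split.
- apply: fin_num_integrable => //.
  by rewrite -integral_loss_pair integrable_fin_num.
- apply: le_legendre_dual_inv => // l [_ lb] l_gt0.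
  have cgf_le : cgf Q (fun z => loss z.1 z.2) (- l) <= (psim l)%:E.
    by rewrite -[X in psim X]opprK cgf_psim ?oppr_le0 ?EFinN ?lteN2 ?ltW.
  by have := DV _ _ cgf_le intp; lra.
- apply: le_legendre_dual_inv => // l dl l_gt0.
  by have := DV _ _ (cgf_psip _ dl) intp; lra.
Qed.

End risk_gap.
End generalization_error.

Theorem theorem1 (R : realType) (d dS dW : measure_display)
  (Omega : measurableType d) (S : measurableType dS) (W : measurableType dW)
  (P : probability Omega R) (pi : probability S R)
  (loss : S -> W -> R) (n : nat)
  (Ss : 'I_n -> {mfun Omega >-> S}) (Wr : {mfun Omega >-> W})
  (bp bm : \bar R) (psip psim : R -> R) :
  (0 < n)%N ->
  (forall s w, 0 <= loss s w) ->
  measurable_fun [set: S * W] (fun z => loss z.1 z.2) ->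
  iid_law P (fun i => Ss i : Omega -> S) pi ->
  (* E[loss(Sbar, Wbar)] is finite, so that Lambda is well defined *)
  (pi \x distribution P Wr)%E.-integrable [set: S * W]
     (fun z => (loss z.1 z.2)%:E) ->
  (0 < bp)%E ->
  convex_function (dom0b bp : set (convex_lmodType R^o)) psip ->
  psip 0 = 0 ->
  (fun h => psip h / h) @ 0^'+ --> 0 ->
  (forall l, dom0b bp l ->
     (cgf (pi \x distribution P Wr)%E (fun z => loss z.1 z.2) l
       <= (psip l)%:E)%E) ->
  (0 < bm)%E ->
  convex_function (dom0b bm : set (convex_lmodType R^o)) psim ->
  psim 0 = 0 ->
  (fun h => psim h / h) @ 0^'+ --> 0 ->
  (forall l, l <= 0 -> (- bm < l%:E)%E ->
     (cgf (pi \x distribution P Wr)%E (fun z => loss z.1 z.2) l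
       <= (psim (- l))%:E)%E) ->
  (- ((n%:R^-1)%:E *
        \sum_(i < n) legendre_dual_inv bp psip (mutual_info P (Ss i) Wr))
     <= gen_error P pi loss (fun i => Ss i : Omega -> S) Wr)%E /\
  (gen_error P pi loss (fun i => Ss i : Omega -> S) Wr
     <= (n%:R^-1)%:E *
        \sum_(i < n) legendre_dual_inv bm psim (mutual_info P (Ss i) Wr))%E.
Proof.
move=> n_gt0 loss_ge0 mloss iid intQ bp_gt0 _ psip0 _ cgf_psip _ _ psim0 _ cgf_psim.
have [MIy|MIfin] := pselect (exists i, mutual_info P (Ss i) Wr = +oo%E).
  by rewrite !(mean_legendre_dual_inv_pinfty n_gt0 _ _ MIy) leNye leey.
have MIE i : mutual_info P (Ss i) Wr = (fine (mutual_info P (Ss i) Wr))%:E.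
  rewrite fineK// fin_numE gt_eqF ?mutual_info_gtNy//=.
  by apply/eqP => MIi; apply: MIfin; exists i.
have gap i := risk_gap_bounds loss_ge0 mloss iid bp_gt0 psip0 psim0
  cgf_psip cgf_psim i _ (MIE i).
rewrite (gen_error_decomp n_gt0 loss_ge0 mloss intQ); last by move=> i; case: (gap i).
rewrite EFinM -sumEFin; split.
- rewrite leeNl -muleN -sumeN; last by [].
  apply: lee_wpmul2l; first by rewrite lee_fin invr_ge0.
  by apply: lee_sum => i _; rewrite -EFinN opprB MIE; case: (gap i).
- apply: lee_wpmul2l; first by rewrite lee_fin invr_ge0.
  by apply: lee_sum => i _; rewrite MIE; case: (gap i).
Qed.
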